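(* Let $\mathbb{K}$ be a field of characteristic $0$, $\mathcal{S}=\mathbb{K}[x_0,\dots,x_n]$, and let $f\in\mathcal{S}_d$ have a Generalized Additive Decomposition $f=\sum_{i=1}^s\omega_i\ell_i^{d-k_i}$ with each $\ell_i=x_0+\xi_{i,1}x_1+\dots+\xi_{i,n}x_n$. Let $\underline\varphi:=\sum_{i=1}^s\omega_i^{d,\ell_i,\mathbf x}(\underline{\mathbf z})e_{\ell_i}(\underline{\mathbf z})$ and let $I_{\underline\varphi}$ be the homogeneous ideal spanned by all homogeneous $p\in\mathcal{S}$ with $p\star\underline\varphi=0$. Then $I_{\underline\varphi}$ is apolar to $f$, i.e. $f^*(p)=0$ for every $p\in(I_{\underline\varphi})_d$.
   Context: $\mathcal{S}^*$ is identified with $\mathbb{K}[[z_0,\dots,z_n]]$ via $\sum_\alpha\varphi_\alpha\underline{\mathbf z}^\alpha/\alpha!\leftrightarrow(\underline{\mathbf x}^\alpha\mapsto\varphi_\alpha)$; $p\star\varphi$ is $q\mapsto\varphi(pq)$; $e_\ell(\underline{\mathbf z})=\exp(\sum_i\underline\xi_iz_i)$ for $\ell=\sum\underline\xi_ix_i$; $f^*:=\frac1{d!}f(z_0,\dots,z_n)\in\mathcal{S}_d^*$. A GAD of $f$ is $f=\sum_i\omega_i\ell_i^{d-k_i}$ with $0\le k_i\le d$, $\omega_i\in\mathcal{S}_{k_i}$, $\ell_i\in\mathcal{S}_1$ pairwise non-proportional, $\ell_i\nmid\omega_i$. For $\mathbf x=(x_1,\dots,x_n)$, writing $\omega_i=\sum_{j}\omega_{i,j}\ell_i^{k_i-j}$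 with $\omega_{i,j}\in\mathbb{K}[x_1,\dots,x_n]_j$, $\omega_i^{d,\ell_i,\mathbf x}:=\frac1{d!}\sum_j(d-j)!\,\omega_{i,j}$, read in the variables $\underline{\mathbf z}$. *)

From HB Require Import structures.
From mathcomp Require Import all_boot all_order all_algebra.
From mathcomp Require Import mpoly.
Set Implicit Arguments. Unset Strict Implicit. Unset Printing Implicit Defensive.
Import Order.TTheory GRing.Theory.
Local Open Scope ring_scope.

Section ApolarDefs.
Variables (K : fieldType) (n : nat).
(* S = K[x_0, ..., x_n]; the variable x_i is 'X_i with i : 'I_n.+1. *)
Local Notation S := {mpoly K[n.+1]}.
Local Notation mon := 'X_{1..n.+1}.

(* Formal power series in z_0..z_n, given by their ordinary coefficients:
   a represents sum_alpha a(alpha) z^alpha. *)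
Definition series := mon -> K.

Definition ser_of_poly (p : S) : series := fun m => p@_m.

Definition ser_mul (a b : series) : series := fun m =>
  \sum_(u : 'X_{1..n.+1 < (mdeg m).+1}) \sum_(v : 'X_{1..n.+1 < (mdeg m).+1})
     (if (val u + val v)%MM == m then a (val u) * b (val v) else 0).

(* exp(L(z)) = sum_k L^k / k! for a linear form L (no constant term):
   its coefficient at z^m only comes from k = |m|. *)
Definition ser_exp_lin (L : S) : series := fun m =>
  (L ^+ mdeg m)@_m / ((mdeg m)`!)%:R.

(* Elements of S^* = linear functionals on S, determined by their values on
   the monomial basis x^alpha. *)
Definition dual := mon -> K.

Definition mfact (m : mon) : nat := (\prod_(i < n.+1) (m i)`!)%N.

(* the identification S^* = K[[z]] :
   sum_alpha phi_alpha z^alpha/alpha!  <->  (x^alpha |-> phi_alpha) *)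
Definition dual_of_series (a : series) : dual := fun m => (mfact m)%:R * a m.

Definition dapp (phi : dual) (p : S) : K := \sum_(m <- msupp p) p@_m * phi m.

Definition star (p : S) (phi : dual) : dual := fun m => dapp phi (p * 'X_[m]).

Definition annihilates (p : S) (phi : dual) : Prop := forall m, star p phi m = 0.

Definition is_homogeneous (p : S) : Prop := exists e : nat, p \is e.-homog.

Definition in_ann_ideal (phi : dual) (p : S) : Prop :=
  exists r : seq (S * S),
    (forall x, x \in r -> is_homogeneous x.2 /\ annihilates x.2 phi) /\
    p = \sum_(x <- r) x.1 * x.2.

(* the linear form x_0 + xi_1 x_1 + ... + xi_n x_n  (xi j is xi_{j+1}) *)
Definition lin_form (xi : 'I_n -> K) : S :=
  'X_ord0 + \sum_(j < n) xi j *: 'X_(lift ord0 j).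

Definition e_ser (l : S) : series := ser_exp_lin l.

Definition fstar (d : nat) (f : S) : dual :=
  dual_of_series (fun m => (d`!%:R)^-1 * f@_m).

(* omega^{d,l,x} := (1/d!) sum_j (d-j)! omega_j , given the decomposition
   omega = sum_{j <= k} omega_j l^(k-j) *)
Definition omega_dx (d k : nat) (omj : nat -> S) : S :=
  (d`!%:R)^-1 *: \sum_(j < k.+1) ((d - j)`!)%:R *: omj j.

Definition phi_GAD (s d : nat) (xi : 'I_s -> 'I_n -> K) (k : 'I_s -> nat)
    (omj : 'I_s -> nat -> S) : dual :=
  dual_of_series (fun m =>
    \sum_(i < s) ser_mul (ser_of_poly (omega_dx d (k i) (omj i)))
                         (e_ser (lin_form (xi i))) m).

End ApolarDefs.

(* In degree d the functional phi coincides with f^*.  For a j-homogeneous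
   omega_{i,j}, the degree-d coefficients of omega_{i,j}(z) e_l(z) are those of
   omega_{i,j} l^(d-j) / (d-j)!, so the weights (d-j)!/d! of omega^{d,l,x}
   reassemble omega_i l^(d-k_i) / d!, and summing over i gives f / d!.  Hence
   f^*(p) = phi(p) for p of degree d, and phi kills I_phi because
   phi(q p) = (p * phi)(q). *)

From HB Require Import structures.
From mathcomp Require Import all_boot all_order all_algebra.
From mathcomp Require Import mpoly zify.
Import Order.TTheory GRing.Theory.
Local Open Scope ring_scope.

Section Apolarity.
Set Implicit Arguments. Unset Strict Implicit.

Variables (K : fieldType) (n : nat).
Local Notation S := {mpoly K[n.+1]}.

Lemma dapp_supp (phi : dual K n) (p : S) (r : seq 'X_{1..n.+1}) :
  uniq r -> {subset msupp p <= r} ->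
  dapp phi p = \sum_(m <- r) p@_m * phi m.
Proof.
move=> ur sub; rewrite /dapp [RHS](bigID (mem (msupp p))) /=.
rewrite [X in _ + X]big1 ?addr0 => [|m]; last first.
  by rewrite -mcoeff_eq0 => /eqP ->; rewrite mul0r.
rewrite -[RHS]big_filter; apply/perm_big/uniq_perm; rewrite ?msupp_uniq ?filter_uniq //.
by move=> m; rewrite mem_filter andb_idr //; apply: sub.
Qed.

Lemma dapp_is_linear (phi : dual K n) : linear_for *%R (dapp phi).
Proof.
move=> a p q; set r := undup (msupp p ++ msupp q ++ msupp (a *: p + q)).
rewrite !(@dapp_supp _ _ r) ?undup_uniq //.
2-4: by move=> m m_u; rewrite mem_undup !mem_cat m_u ?orbT.
rewrite mulr_sumr -big_split; apply: eq_bigr => m _.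
by rewrite mcoeffD mcoeffZ mulrDl mulrA.
Qed.

HB.instance Definition _ (phi : dual K n) :=
  GRing.isLinear.Build K S K *%R (dapp phi) (dapp_is_linear phi).

Lemma dapp_ann_mul (phi : dual K n) (p q : S) :
  annihilates p phi -> dapp phi (q * p) = 0.
Proof.
move=> ann_p; rewrite [q]mpolyE mulr_suml linear_sum big1 // => m _.
by rewrite -scalerAl ['X_[m] * p]mulrC linearZ /= -/(star p phi m) ann_p mulr0.
Qed.

Lemma dapp_ann_ideal (phi : dual K n) (p : S) :
  in_ann_ideal phi p -> dapp phi p = 0.
Proof.
case=> r [ann_r ->]; rewrite linear_sum big_seq big1 // => x /ann_r [_].
exact: dapp_ann_mul.
Qed.

Lemma dapp_homog_eq (phi psi : dual K n) (d : nat) (p : S) :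
  {in [pred m | mdeg m == d], phi =1 psi} -> p \is d.-homog ->
  dapp phi p = dapp psi p.
Proof.
move=> eq_phi /dhomogP hom_p; apply: eq_big_seq => m m_p.
by rewrite eq_phi // inE hom_p.
Qed.

Lemma ser_mul_polyE (A : S) (b : series K n) m :
  ser_mul (ser_of_poly A) b m =
  \sum_(u : 'X_{1..n.+1 < (mdeg m).+1, (mdeg m).+1} | m == (u.1 + u.2)%MM)
      A@_u.1 * b u.2.
Proof.
rewrite /ser_mul /ser_of_poly pair_bigA [RHS]big_mkcond /=.
by apply: eq_bigr => u _; rewrite eq_sym.
Qed.

Lemma ser_mul_polyZ c (A : S) b m :
  ser_mul (ser_of_poly (c *: A)) b m = c * ser_mul (ser_of_poly A) b m.
Proof.
by rewrite !ser_mul_polyE mulr_sumr; apply: eq_bigr => u _; rewrite mcoeffZ mulrA.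
Qed.

Lemma ser_mul_poly_sum (I : Type) (r : seq I) (A : I -> S) b m :
  ser_mul (ser_of_poly (\sum_(i <- r) A i)) b m =
  \sum_(i <- r) ser_mul (ser_of_poly (A i)) b m.
Proof.
rewrite ser_mul_polyE; under eq_bigr do rewrite raddf_sum /= mulr_suml.
by rewrite exchange_big; apply: eq_bigr => i _; rewrite ser_mul_polyE.
Qed.

Lemma ser_mul_homog_exp_lin (A L : S) (j : nat) m : A \is j.-homog ->
  ser_mul (ser_of_poly A) (ser_exp_lin L) m =
  (A * L ^+ (mdeg m - j))@_m / ((mdeg m - j)`!)%:R.
Proof.
move=> /dhomogP hom_A; rewrite ser_mul_polyE mcoeffM mulr_suml.
apply: eq_bigr => u /eqP m_u; rewrite /ser_exp_lin mulrA.
have [->|nz] := eqVneq A@_u.1 0; first by rewrite !mul0r.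
have deg_u1 : mdeg u.1 = j by apply: hom_A; rewrite mcoeff_msupp.
suff -> : mdeg u.2 = (mdeg m - j)%N by [].
have deg_m : mdeg m = (j + mdeg u.2)%N by rewrite {1}m_u mdegD deg_u1.
by rewrite [X in (X - j)%N]deg_m addKn.
Qed.

Lemma ser_mul_omega_dx_exp_lin d k (omj : nat -> S) L m :
  [pchar K] =i pred0 -> (k <= d)%N -> (forall j, omj j \is j.-homog) ->
  mdeg m = d ->
  ser_mul (ser_of_poly (omega_dx d k omj)) (ser_exp_lin L) m =
  (d`!%:R)^-1 * ((\sum_(j < k.+1) omj j * L ^+ (k - j)) * L ^+ (d - k))@_m.
Proof.
move=> /pcharf0P charK0 k_le_d hom_omj deg_m.
rewrite ser_mul_polyZ ser_mul_poly_sum mulr_suml raddf_sum; congr (_ * _).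
apply: eq_bigr => j _; have j_le_k := ltn_ord j.
rewrite ser_mul_polyZ (ser_mul_homog_exp_lin _ _ (hom_omj j)) deg_m.
have -> : (d - j = k - j + (d - k))%N by lia.
by rewrite -mulrA -exprD mulrC divfK // charK0 -lt0n fact_gt0.
Qed.

Lemma phi_GAD_eq_fstar s d xi k (omega : 'I_s -> S) omj f m :
  [pchar K] =i pred0 -> (forall i, (k i <= d)%N) ->
  (forall i j, omj i j \is j.-homog) ->
  (forall i, omega i = \sum_(j < (k i).+1) omj i j * lin_form (xi i) ^+ (k i - j)) ->
  f = \sum_(i < s) omega i * lin_form (xi i) ^+ (d - k i) ->
  mdeg m = d -> phi_GAD d xi k omj m = fstar d f m.
Proof.
move=> charK0 k_le_d hom_omj omegaE fE deg_m; congr (_ * _).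
rewrite fE raddf_sum mulr_sumr; apply: eq_bigr => i _.
by rewrite ser_mul_omega_dx_exp_lin // -omegaE.
Qed.

End Apolarity.

Theorem lemma5p1 (K : fieldType) (n d s : nat)
  (charK0 : [pchar K] =i pred0)
  (f : {mpoly K[n.+1]}) (xi : 'I_s -> 'I_n -> K) (k : 'I_s -> nat)
  (omega : 'I_s -> {mpoly K[n.+1]}) (omj : 'I_s -> nat -> {mpoly K[n.+1]}) :
  f \is d.-homog ->
  (* the GAD  f = sum_i omega_i l_i^(d - k_i) *)
  (forall i, (k i <= d)%N) ->
  (forall i, omega i \is (k i).-homog) ->
  (forall i j, i != j ->
     ~ exists c : K, lin_form (xi i) = c *: lin_form (xi j)) ->
  (forall i, ~ exists q, omega i = lin_form (xi i) * q) ->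
  f = \sum_(i < s) omega i * lin_form (xi i) ^+ (d - k i) ->
  (* omega_i = sum_j omega_{i,j} l_i^(k_i - j), omega_{i,j} in K[x_1..x_n]_j *)
  (forall i j, omj i j \is j.-homog) ->
  (forall i j m, m \in msupp (omj i j) -> m ord0 = 0%N) ->
  (forall i, omega i = \sum_(j < (k i).+1) omj i j * lin_form (xi i) ^+ (k i - j)) ->
  forall p : {mpoly K[n.+1]},
    in_ann_ideal (phi_GAD d xi k omj) p -> p \is d.-homog ->
    dapp (fstar d f) p = 0.
Proof.
(* Only the two expansions of f and of the omega_i matter. *)
move=> _ k_le_d _ _ _ fE hom_omj _ omegaE p p_ann hom_p.
have agree : {in [pred m | mdeg m == d], fstar d f =1 phi_GAD d xi k omj}.
  by move=> m /eqP deg_m; rewrite (phi_GAD_eq_fstar charK0 k_le_d hom_omj omegaE fE).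
by rewrite (dapp_homog_eq agree hom_p) (dapp_ann_ideal p_ann).
Qed.
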